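(* Let $L\ge2$ be an integer. Let $\bm{\xi}=\{\xi_{M,U}:(M,U)\in\mathcal{M}\times\mathcal{U},\ 0\le c(M,U)\le1\}$ be real constants with $|\xi_{M,U}|\le1$. Suppose $\eta_2$ and $\{\delta_2(N)\}_{N=1,2,\dots}$ satisfy $\exp[-N\delta_2(N)]\le\eta_2$ for all $N\ge 1$. If the random variables $(N,m^N,u^N,x^N)$ described in the context satisfy, for $N\ge1$, $$\Pr\{x^N\mid N,m^N,u^N\}=\prod_{k=1}^N[c(m_k,u_k)]^{x_k}[1-c(m_k,u_k)]^{1-x_k},$$ then $$\Pr\{N\ge1,\ \tilde P_{m^N,u^N,x^N}\notin\mathcal{P}^{\bm{\xi},\delta_2(N)}\}\le\eta_2.$$
   Context: For a finite set $\Omega$, $\mathcal{P}_\Omega$ is the set of probability mass functions on $\Omega$; for $\omega^n\in\Omega^n$ the type is $\tilde P_{\omega^n}(\omega)=\frac1n|\{i:\omega_i=\omega\}|$ ($\tilde P_{m^N,u^N,x^N}$ is the type of the sequence of triples $(m_k,u_k,x_k)$). Let $\mathcal{M}=\{0,\dots,L\}$, $\mathcal{U}=\mathcal{X}=\{0,1\}$, $\mathcal{W}=\{(M,U,X)\in\mathcal{M}\times\mathcal{U}\times\mathcal{X}:0\le M-U-X\le L-2\}$, and $c(M,U):=(M-U)/(L-1)$. For $P\in\mathcal{P}_{\mathcal{W}}$, $P_{\mathcal{M}\times\mathcal{U}}$ is the distribution of $(M,U)$ under $P$. Random variables: on a probability space (probability $\Pr$), $N$ is a non-negative integer and when $N\ge1$,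 $m^N\in\mathcal{M}^N$, $u^N\in\mathcal{U}^N$, $x^N\in\mathcal{X}^N$ with $(m_k,u_k,x_k)\in\mathcal{W}$ for all $k$. $\mathcal{P}^{\bm{\xi},\delta_2}:=\{P\in\mathcal{P}_{\mathcal{W}}: \mathbb{E}_{(M,U,X)\sim P}[(X-c(M,U))\xi_{M,U}]\le\frac{\delta_2}{3}+[(\frac{\delta_2}{3})^2+2\delta_2\,\mathbb{E}_{(M,U)\sim P_{\mathcal{M}\times\mathcal{U}}}[c(M,U)(1-c(M,U))\xi_{M,U}^2]]^{1/2}\}$. *)

From HB Require Import structures.
From mathcomp Require Import all_boot all_order all_algebra.
From mathcomp Require Import all_classical all_reals all_analysis.
Unset Printing Implicit Defensive.
Import Order.TTheory GRing.Theory Num.Theory.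
Local Open Scope ring_scope.

Section Defs.
Variables (R : realType) (L : nat).

(* M = {0..L} as 'I_(L.+1); U = X = {0,1} as bool; a triple (M,U,X) is ((M,U),X). *)
Definition triple := ('I_L.+1 * bool * bool)%type.

Definition cMU (M : 'I_L.+1) (U : bool) : R :=
  ((M : nat)%:R - (U : nat)%:R) / ((L : nat)%:R - 1).

Definition inW (w : triple) : Prop :=
  let: (M, U, X) := w in
  (0 <= (M : nat)%:Z - (U : nat)%:Z - (X : nat)%:Z)%R /\
  ((M : nat)%:Z - (U : nat)%:Z - (X : nat)%:Z <= (L : nat)%:Z - 2)%R.

(* P_W : probability mass functions on W (viewed as functions on all
   triples vanishing outside W) *)
Definition pmf_on_W (P : triple -> R) : Prop :=
  (forall w, 0 <= P w) /\ (\sum_(w : triple) P w = 1) /\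
  (forall w, ~ inW w -> P w = 0).

Definition marg_MU (P : triple -> R) (M : 'I_L.+1) (U : bool) : R :=
  \sum_(X : bool) P (M, U, X).

Definition P_xi_delta (xi : 'I_L.+1 -> bool -> R) (delta2 : R)
  (P : triple -> R) : Prop :=
  pmf_on_W P /\
  \sum_(w : triple) P w *
      (((w.2 : nat)%:R - cMU w.1.1 w.1.2) * xi w.1.1 w.1.2)
  <= delta2 / 3 +
     Num.sqrt ((delta2 / 3) ^+ 2 +
       2 * delta2 * \sum_(M : 'I_L.+1) \sum_(U : bool)
          marg_MU P M U * (cMU M U * (1 - cMU M U) * (xi M U) ^+ 2)).

Definition emp_type (s : seq triple) : triple -> R :=
  fun w => (count_mem w s)%:R / (size s)%:R.

Definition triples (ms : seq 'I_L.+1) (us xs : seq bool) : seq triple :=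
  zip (zip ms us) xs.

Definition bern_prod (ms : seq 'I_L.+1) (us xs : seq bool) : R :=
  \prod_(t <- triples ms us xs)
    (cMU t.1.1 t.1.2 ^+ (t.2 : nat) * (1 - cMU t.1.1 t.1.2) ^+ (1 - (t.2 : nat))).

End Defs.

From HB Require Import structures.
From mathcomp Require Import all_boot all_order all_algebra.
From mathcomp Require Import all_classical all_reals all_analysis.
From mathcomp Require Import ring lra zify.
Import Order.TTheory GRing.Theory Num.Theory.
Local Open Scope ring_scope.

(* Condition on the sample size n and on (m^n, u^n).  The x_k are then
   independent Bernoulli(c_k) with c_k = c(m_k, u_k), and the type of the
   sample leaves P^{xi,delta} exactly when the centred sum
   S = sum_k (x_k - c_k) xi_k exceeds
   a = n (delta/3 + sqrt((delta/3)^2 + 2 delta V/n)),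
   where V = sum_k c_k (1 - c_k) xi_k^2.  A Chernoff bound, with the estimate
   exp z <= 1 + z + z^2 / (2 (1 - lam/3)) for |z| <= lam < 3, gives Bernstein's
   inequality P(S > a) <= exp(-a^2 / (2 (V + a/3))), and a is precisely the
   threshold at which this exponent equals n delta.  Hence each conditional
   probability is at most exp(-n delta(n)) <= eta2, and the claim follows by
   summing over the countably many values of (N, m^N, u^N). *)

Fixpoint bitseqs (n : nat) : seq bitseq :=
  if n is n'.+1 then [seq b :: xs | b <- [:: true; false], xs <- bitseqs n']
  else [:: [::]].

Lemma bitseqsS n :
  bitseqs n.+1 = [seq b :: xs | b <- [:: true; false], xs <- bitseqs n].
Proof. by []. Qed.

Lemma mem_bitseqs n xs : (xs \in bitseqs n) = (size xs == n).
Proof.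
elim: n xs => [|n IHn] [|b xs] //; rewrite bitseqsS.
  by apply/negbTE/allpairsP => -[[? ?] []].
rewrite eqSS -IHn; apply/idP/idP => [/allpairsP[[? ?] [_ ? [_ ->]]] // | xs_n].
by apply/allpairsP; exists (b, xs); case: b.
Qed.

Lemma uniq_bitseqs n : uniq (bitseqs n).
Proof.
elim: n => [|n IHn] //; rewrite bitseqsS.
by apply: allpairs_uniq => // -[b xs] [c ys] _ _ [-> ->].
Qed.

Lemma mem_zip_fst (S T : eqType) (s : seq S) (t : seq T) w :
  w \in zip s t -> w.1 \in s.
Proof.
elim: s t => [|a s IHs] [|b t] //=.
by rewrite !inE => /orP[/eqP -> | /IHs ->]; rewrite ?eqxx ?orbT.
Qed.

Lemma big_bitseqs_zip (R : pzSemiRingType) (I : Type) (ps : seq I)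
    (g : I * bool -> R) :
  \sum_(xs <- bitseqs (size ps)) \prod_(w <- zip ps xs) g w =
  \prod_(p <- ps) (g (p, true) + g (p, false)).
Proof.
elim: ps => [|p ps IHps]; first by rewrite big_seq1 !big_nil.
rewrite bitseqsS big_allpairs_dep big_cons big_seq1 big_cons -IHps mulrDl !mulr_sumr.
by congr (_ + _); apply: eq_bigr => xs _; rewrite big_cons.
Qed.

Lemma big_zip_fst (R : Type) (idx : R) (op : R -> R -> R) (S T : Type)
    (s : seq S) (t : seq T) (F : S -> R) :
  (size s <= size t)%N -> \big[op/idx]_(w <- zip s t) F w.1 = \big[op/idx]_(p <- s) F p.
Proof. by move=> st; rewrite -[in RHS](unzip1_zip st) big_map. Qed.

Lemma sum_count_mem (R : pzSemiRingType) (T : finType) (s : seq T) (F : T -> R) :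
  \sum_(w : T) (count_mem w s)%:R * F w = \sum_(w <- s) F w.
Proof.
elim: s => [|a s IHs]; first by rewrite big_nil big1 // => w _; rewrite mul0r.
rewrite big_cons -IHs /=; under eq_bigr do rewrite natrD mulrDl.
rewrite big_split /= (bigD1 a) //= eqxx mul1r big1 ?addr0 // => w.
by rewrite eq_sym => /negbTE ->; rewrite mul0r.
Qed.

Lemma ler_sum_subpred (R : numDomainType) (I : eqType) (r : seq I) (P Q : pred I)
    (F : I -> R) :
  {in r, forall i, P i -> Q i} -> {in r, forall i, 0 <= F i} ->
  \sum_(i <- r | P i) F i <= \sum_(i <- r | Q i) F i.
Proof.
move=> PQ F_ge0; rewrite big_seq_cond [X in _ <= X]big_seq_cond.
rewrite big_mkcond [X in _ <= X]big_mkcond /=; apply: ler_sum => i _.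
case: (boolP (i \in r)) => //= i_r.
by case: ifP => [/(PQ _ i_r) -> // | _]; case: ifP => // _; exact: F_ge0.
Qed.

Lemma leq_mul2_exp3_fact k : (2 * 3 ^ k <= k.+2`!)%N.
Proof. by elim: k => [|k IHk] //; rewrite factS expnS mulnCA leq_mul. Qed.

Section ExpQuadraticBound.
Context {R : realType}.

Lemma exp_coeff_le_geometric (lam z : R) k : `|z| <= lam ->
  exp_coeff z k.+2 <= geometric (z ^+ 2 / 2) (lam / 3) k.
Proof.
move=> z_le_lam; have lam_ge0 : 0 <= lam := le_trans (normr_ge0 z) z_le_lam.
rewrite exp_coeffE /=; apply: (le_trans (ler_norm _)).
rewrite normrM normfV normr_nat normrX.
have -> : `|z| ^+ k.+2 = z ^+ 2 * `|z| ^+ k.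
  by rewrite -addn2 exprD real_normK ?num_real // mulrC.
have fact_ge : (2 * 3 ^ k)%:R <= k.+2`!%:R :> R.
  by rewrite ler_nat leq_mul2_exp3_fact.
have -> : z ^+ 2 / 2 * (lam / 3) ^+ k = (2 * 3 ^ k)%:R^-1 * (z ^+ 2 * lam ^+ k).
  by rewrite expr_div_n natrM natrX; field; rewrite expf_neq0.
apply: ler_pM; rewrite ?invr_ge0 ?ler0n ?(mulr_ge0 (sqr_ge0 _)) ?exprn_ge0 //.
- by rewrite lef_pV2 ?posrE ?ltr0n ?muln_gt0 ?expn_gt0 ?fact_gt0.
- by rewrite ler_wpM2l ?sqr_ge0 // lerXn2r ?nnegrE.
Qed.

Lemma expR_le_quadratic (lam z : R) : 0 < lam < 3 -> `|z| <= lam ->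
  expR z <= 1 + z + z ^+ 2 / (2 * (1 - lam / 3)).
Proof.
move=> /andP[lam_gt0 lam_lt3] z_le_lam.
rewrite /expR; apply: limr_le; first exact: is_cvg_series_exp_coeff.
near=> n; have /subnK <- : (2 <= n)%N by near: n; exact: nbhs_infty_ge.
rewrite addn2 /series /= big_nat_recl // big_nat_recl // -addrA.
rewrite {1 2}/exp_coeff /= expr0 expr1 fact0 !divr1 !lerD2l.
apply: (le_trans (ler_sum_nat (fun k _ => exp_coeff_le_geometric _ _ k z_le_lam))).
have -> : z ^+ 2 / (2 * (1 - lam / 3)) = z ^+ 2 / 2 / (1 - lam / 3).
  by rewrite invfM mulrA.
apply: geometric_le_lim; rewrite ?divr_ge0 ?sqr_ge0 ?divr_gt0 //.
by rewrite ger0_norm; lra.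
Unshelve. all: by end_near.
Qed.

Lemma bernoulli_mgf_le (lam c y : R) : 0 < lam < 3 -> 0 <= c <= 1 -> `|y| <= 1 ->
  c * expR (lam * ((1 - c) * y)) + (1 - c) * expR (lam * (- c * y)) <=
  expR (lam ^+ 2 * (c * (1 - c) * y ^+ 2) / (2 * (1 - lam / 3))).
Proof.
move=> lam_range /andP[c_ge0 c_le1] y_le1.
have lam_gt0 : 0 < lam by case/andP: lam_range.
have y_ge0 : 0 <= `|y| := normr_ge0 y.
have quadratic_le z : `|z| <= 1 ->
    expR (lam * z) <= 1 + lam * z + (lam * z) ^+ 2 / (2 * (1 - lam / 3)).
  move=> z_le1; apply: expR_le_quadratic => //.
  by rewrite normrM gtr0_norm //; apply: ler_piMr => //; exact: ltW.
have up := quadratic_le ((1 - c) * y).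
have down := quadratic_le (- c * y).
have c'_ge0 : 0 <= 1 - c by lra.
rewrite !normrM normrN (ger0_norm c_ge0) (ger0_norm c'_ge0) in up down.
apply: le_trans (expR_ge1Dx _).
apply: le_trans (lerD (ler_wpM2l c_ge0 (up _)) (ler_wpM2l c'_ge0 (down _))) _.
- by apply: mulr_ile1; lra.
- by apply: mulr_ile1; lra.
by rewrite le_eqVlt; apply/orP; left; apply/eqP; field; lra.
Qed.

Lemma bernstein_exponent (V a : R) : 0 <= V -> 0 < a ->
  exists2 lam, 0 < lam < 3 &
    - (lam * a) + lam ^+ 2 * V / (2 * (1 - lam / 3)) <=
    - (a ^+ 2 / (2 * (V + a / 3))).
Proof.
(* The optimal lam = a / (V + a/3) degenerates to 3 when V = 0; then lam = 2 will do. *)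
move=> V_ge0 a_gt0; have [-> | V_neq0] := eqVneq V 0.
  exists 2; first lra.
  have -> : a ^+ 2 / (2 * (0 + a / 3)) = 3 / 2 * a by field; lra.
  by rewrite mulr0 mul0r addr0; lra.
have V_gt0 : 0 < V by rewrite lt_def V_neq0.
exists (a / (V + a / 3)).
  by rewrite divr_gt0 ?ltr_pdivrMr /=; lra.
have -> : 1 - a / (V + a / 3) / 3 = V / (V + a / 3) by field; lra.
by rewrite le_eqVlt; apply/orP; left; apply/eqP; field; lra.
Qed.

Definition bernstein_threshold (n delta V : R) : R :=
  n * (delta / 3 + Num.sqrt ((delta / 3) ^+ 2 + 2 * delta * (V / n))).

Lemma bernstein_threshold_gt0 n delta V :
  0 < n -> 0 < delta -> 0 < bernstein_threshold n delta V.
Proof.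
move=> n_gt0 delta_gt0; apply: mulr_gt0 => //.
by have := sqrtr_ge0 ((delta / 3) ^+ 2 + 2 * delta * (V / n)); lra.
Qed.

Lemma bernstein_thresholdE n delta V : 0 < n -> 0 < delta -> 0 <= V ->
  bernstein_threshold n delta V ^+ 2 /
    (2 * (V + bernstein_threshold n delta V / 3)) = n * delta.
Proof.
move=> n_gt0 delta_gt0 V_ge0; rewrite /bernstein_threshold.
set s := Num.sqrt _.
have s_ge0 : 0 <= s := sqrtr_ge0 _.
have sE : s ^+ 2 = (delta / 3) ^+ 2 + 2 * delta * (V / n).
  by rewrite sqr_sqrtr // addr_ge0 ?sqr_ge0 // mulr_ge0 ?divr_ge0 //; lra.
have VE : V = n * (s ^+ 2 - (delta / 3) ^+ 2) / (2 * delta).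
  by rewrite sE; field; lra.
rewrite VE; field; rewrite !gt_eqF //.
have : 0 < (3 * s + delta) ^+ 2 by rewrite exprn_gt0 //; lra.
nra.
Qed.

End ExpQuadraticBound.

Section Chernoff.
Context {R : realType} {I : eqType}.

Lemma chernoff_bitseqs (ps : seq I) (q Y : I * bool -> R) (lam a : R) :
  0 <= lam -> (forall p b, p \in ps -> 0 <= q (p, b)) ->
  \sum_(xs <- bitseqs (size ps) | a < \sum_(w <- zip ps xs) Y w)
      \prod_(w <- zip ps xs) q w <=
  expR (- (lam * a)) * \prod_(p <- ps)
    (q (p, true) * expR (lam * Y (p, true)) + q (p, false) * expR (lam * Y (p, false))).
Proof.
(* Markov: [a < S] <= exp (lam (S - a)), and exp (lam S) factorizes along ps. *)
move=> lam_ge0 q_ge0.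
rewrite -(@big_bitseqs_zip R _ ps (fun w => q w * expR (lam * Y w))).
rewrite mulr_sumr big_mkcond /=.
apply: ler_sum => xs _.
have prod_ge0 : 0 <= \prod_(w <- zip ps xs) q w.
  by rewrite big_seq prodr_ge0 // => -[p b] /mem_zip_fst; exact: q_ge0.
rewrite big_split /= -expR_sum mulrCA -expRD -mulr_sumr -mulrN -mulrDr addrC.
case: ifP => [a_lt | _]; last by rewrite mulr_ge0 ?expR_ge0.
rewrite -[X in X <= _]mulr1 ler_wpM2l // -expR0 ler_expR mulr_ge0 // subr_ge0.
exact: ltW.
Qed.

End Chernoff.

Section BernoulliSequences.
Context {R : realType} {I : eqType}.
Variables (c y : I -> R).

Definition bernoulli_weight (w : I * bool) : R :=
  c w.1 ^+ w.2 * (1 - c w.1) ^+ (1 - w.2).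

Definition centered_score (w : I * bool) : R := ((w.2 : nat)%:R - c w.1) * y w.1.

Definition score_variance (ps : seq I) : R :=
  \sum_(p <- ps) c p * (1 - c p) * y p ^+ 2.

Lemma sum_bernoulli_weight (ps : seq I) :
  \sum_(xs <- bitseqs (size ps)) \prod_(w <- zip ps xs) bernoulli_weight w = 1.
Proof.
rewrite big_bitseqs_zip big1 // => p _.
by rewrite /bernoulli_weight /= expr1 expr0 mulr1 mul1r subrKC.
Qed.

Variables (ps : seq I)
  (ps_bounded : forall p, p \in ps -> 0 <= c p <= 1 /\ `|y p| <= 1).

Lemma bernoulli_weight_ge0 p b : p \in ps -> 0 <= bernoulli_weight (p, b).
Proof.
move=> /ps_bounded[/andP[c_ge0 c_le1] _].
by rewrite mulr_ge0 ?exprn_ge0 ?subr_ge0.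
Qed.

Lemma score_variance_ge0 : 0 <= score_variance ps.
Proof.
rewrite /score_variance big_seq sumr_ge0 // => p /ps_bounded[/andP[? ?] _].
by rewrite mulr_ge0 ?sqr_ge0 // mulr_ge0 ?subr_ge0.
Qed.

Lemma bernstein_bitseqs a : 0 < a ->
  \sum_(xs <- bitseqs (size ps) | a < \sum_(w <- zip ps xs) centered_score w)
      \prod_(w <- zip ps xs) bernoulli_weight w <=
  expR (- (a ^+ 2 / (2 * (score_variance ps + a / 3)))).
Proof.
move=> a_gt0.
have [lam lam_range exponent_le] := bernstein_exponent _ _ score_variance_ge0 a_gt0.
have lam_gt0 : 0 < lam by case/andP: lam_range.
apply: le_trans (chernoff_bitseqs ps _ _ lam a (ltW lam_gt0) bernoulli_weight_ge0) _.
rewrite -ler_expR in exponent_le; apply: le_trans exponent_le.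
rewrite expRD ler_wpM2l ?expR_ge0 // /score_variance mulr_sumr mulr_suml expR_sum.
rewrite big_seq [X in _ <= X]big_seq; apply: ler_prod => p p_in.
have [c_range y_le1] := ps_bounded _ p_in; have /andP[c_ge0 c_le1] := c_range.
rewrite /bernoulli_weight /centered_score /= !expr1 expr0 mulr1 mul1r sub0r.
apply/andP; split; last exact: bernoulli_mgf_le.
by rewrite addr_ge0 ?mulr_ge0 ?expR_ge0 ?subr_ge0.
Qed.

End BernoulliSequences.

Section EmpiricalType.
Variables (R : realType) (L : nat).

Lemma sum_emp_type (s : seq (triple L)) (F : triple L -> R) :
  \sum_w emp_type R L s w * F w = (\sum_(w <- s) F w) / (size s)%:R.
Proof.
by rewrite -(sum_count_mem _ _ s F) mulr_suml; apply: eq_bigr => w _; rewrite mulrAC.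
Qed.

Lemma sum_marg_emp_type (s : seq (triple L)) (G : 'I_L.+1 -> bool -> R) :
  \sum_M \sum_U marg_MU R L (emp_type R L s) M U * G M U =
  (\sum_(w <- s) G w.1.1 w.1.2) / (size s)%:R.
Proof.
rewrite -sum_emp_type.
under eq_bigr do under eq_bigr do rewrite /marg_MU mulr_suml.
rewrite pair_big /= pair_big /=.
by apply: eq_bigr => -[[M U] X].
Qed.

Lemma emp_type_pmf (s : seq (triple L)) :
  (0 < size s)%N -> {in s, forall w, inW L w} -> pmf_on_W R L (emp_type R L s).
Proof.
move=> s_gt0 s_W; split; [|split].
- by move=> w; rewrite divr_ge0.
- have := sum_emp_type s (fun=> 1); under eq_bigr do rewrite mulr1.
  by rewrite big_const_seq count_predT iter_addr_0 divff // pnatr_eq0 -lt0n.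
- move=> w w_notW; rewrite /emp_type; have /count_memPn -> : w \notin s.
    by apply: contra_notN w_notW => /s_W.
  by rewrite mul0r.
Qed.

Lemma inW_cMU (w : triple L) : (2 <= L)%N -> inW L w -> 0 <= cMU R L w.1.1 w.1.2 <= 1.
Proof.
case: w => [[M U] X] L_ge2 /= [lo hi].
have M_le : (M <= L)%N := ltn_ord M.
have [U_le_M MU_le] : (U <= M)%N /\ (M - U <= L - 1)%N.
  by move: lo hi; case: U; case: X => /=; lia.
rewrite /cMU -natrB // -(natrB _ (_ : 1 <= L)%N); last lia.
by rewrite divr_ge0 ?ler0n //= ler_pdivrMr ?ltr0n ?subn_gt0 // mul1r ler_nat.
Qed.

End EmpiricalType.

Section Atypical.
Variables (R : realType) (L : nat) (xi : 'I_L.+1 -> bool -> R).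
Let c (p : 'I_L.+1 * bool) := cMU R L p.1 p.2.
Let y (p : 'I_L.+1 * bool) := xi p.1 p.2.

Definition atypical (delta : R) (ms : seq 'I_L.+1) (us xs : seq bool) : bool :=
  `[< {in triples L ms us xs, forall w, inW L w} /\
      ~ P_xi_delta R L xi delta (emp_type R L (triples L ms us xs)) >].

Lemma atypical_score_gt delta ms us xs :
  size ms = size us -> size xs = size us -> (0 < size us)%N ->
  atypical delta ms us xs ->
  bernstein_threshold (size us)%:R delta (score_variance c y (zip ms us)) <
    \sum_(w <- triples L ms us xs) centered_score c y w.
Proof.
move=> ms_us xs_us n_gt0 /asboolP[s_W not_typical].
rewrite ltNge; apply/negP => score_le; apply: not_typical.
have zip_size : size (zip ms us) = size us by rewrite size_zip ms_us minnn.
have s_size : size (triples L ms us xs) = size us.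
  by rewrite size_zip zip_size xs_us minnn.
split; first by apply: emp_type_pmf; rewrite // s_size.
have variance_sum : \sum_(w <- triples L ms us xs) c w.1 * (1 - c w.1) * y w.1 ^+ 2 =
    score_variance c y (zip ms us).
  by apply: big_zip_fst; rewrite zip_size xs_us.
rewrite sum_emp_type sum_marg_emp_type s_size variance_sum.
by rewrite ler_pdivrMr ?ltr0n // mulrC.
Qed.

Hypotheses (L_ge2 : (2 <= L)%N)
  (xi_bounded : forall M U, 0 <= cMU R L M U <= 1 -> `|xi M U| <= 1).

Lemma atypical_bern_prod_ge0 delta ms us xs :
  atypical delta ms us xs -> 0 <= bern_prod R L ms us xs.
Proof.
case/asboolP => xs_W _; rewrite /bern_prod big_seq prodr_ge0 // => w /xs_W w_W.
have /andP[c_ge0 c_le1] := inW_cMU R _ w L_ge2 w_W.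
by rewrite mulr_ge0 ?exprn_ge0 ?subr_ge0.
Qed.

Lemma sum_bern_prod_atypical delta ms us :
  size ms = size us -> (0 < size us)%N ->
  \sum_(xs <- bitseqs (size us) | atypical delta ms us xs) bern_prod R L ms us xs <=
  expR (- ((size us)%:R * delta)).
Proof.
move=> ms_us n_gt0; have zip_size : size (zip ms us) = size us.
  by rewrite size_zip ms_us minnn.
have [|no_atypical] := boolP (has (atypical delta ms us) (bitseqs (size us)));
  last by rewrite big_hasC // expR_ge0.
(* An atypical sample lies in W, which forces 0 <= c <= 1 along (ms, us). *)
case/hasP => xs0; rewrite mem_bitseqs => /eqP xs0_size /asboolP[xs0_W _].
have ps_bounded p : p \in zip ms us -> 0 <= c p <= 1 /\ `|y p| <= 1.
  rewrite -(unzip1_zip (_ : size (zip ms us) <= size xs0)%N) ?zip_size ?xs0_size //.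
  case/mapP => w /xs0_W w_W ->; have c_range := inW_cMU R _ w L_ge2 w_W.
  by split; last exact: xi_bounded.
have weight_ge0 xs : 0 <= bern_prod R L ms us xs.
  rewrite /bern_prod big_seq prodr_ge0 // => -[p b] /mem_zip_fst.
  exact: bernoulli_weight_ge0 _ _ _ ps_bounded p b.
rewrite -zip_size; have [delta_gt0 | delta_le0] := ltrP 0 delta.
- have n_gt0' : (0 : R) < (size (zip ms us))%:R by rewrite ltr0n zip_size.
  have a_gt0 : 0 < bernstein_threshold (size (zip ms us))%:R delta
                     (score_variance c y (zip ms us)).
    exact: bernstein_threshold_gt0.
  apply: le_trans (le_trans _ (bernstein_bitseqs _ _ _ ps_bounded _ a_gt0)) _.
  + apply: ler_sum_subpred => // xs; rewrite mem_bitseqs zip_size => /eqP xs_size.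
    exact: atypical_score_gt.
  + by rewrite bernstein_thresholdE // score_variance_ge0.
- apply: (@le_trans _ _ 1).
    rewrite -(sum_bernoulli_weight c (zip ms us)).
    by apply: ler_sum_subpred => // xs _ _; exact: weight_ge0.
  by rewrite -expR0 ler_expR oppr_ge0 mulr_ge0_le0.
Qed.

End Atypical.

Local Open Scope classical_set_scope.

Lemma set_seq_cons (J : eqType) (j : J) (s : seq J) : [set` j :: s] = j |` [set` s].
Proof.
apply/seteqP; split => x /=; rewrite inE; first by case/orP => [/eqP|]; [left|right].
by case=> [->|->]; rewrite ?eqxx ?orbT.
Qed.

Section MeasureOfFibers.
Context {d : measure_display} {T : measurableType d} {R : realType}.
Variable mu : {measure set T -> \bar R}.
Variables (J : eqType) (A : set T) (g : T -> J).
Hypothesis measurable_fibers : forall j, measurable (A `&` g @^-1` [set j]).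

Lemma measurable_preimage_seq (s : seq J) : measurable (A `&` g @^-1` [set` s]).
Proof.
elim: s => [|j s IHs]; first by rewrite set_nil preimage_set0 setI0.
by rewrite set_seq_cons preimage_setU setIUr; exact: measurableU.
Qed.

Lemma measure_preimage_seq (s : seq J) : uniq s ->
  mu (A `&` g @^-1` [set` s]) = \sum_(j <- s) mu (A `&` g @^-1` [set j]).
Proof.
elim: s => [|j s IHs]; first by rewrite set_nil preimage_set0 setI0 measure0 big_nil.
case/andP => j_notin_s s_uniq.
rewrite set_seq_cons preimage_setU setIUr measureU ?big_cons //.
- by congr (_ + _); exact: IHs.
- exact: measurable_preimage_seq.
- by rewrite -subset0 => t [[_ /= ->] [_ /=]]; apply/negP.
Qed.

End MeasureOfFibers.

Section FiberBound.
Context {d : measure_display} {T : measurableType d} {R : realType}.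
Variable mu : {measure set T -> \bar R}.

Lemma measure_le_nat_fibers (g : T -> nat) (B : set T) (eta : R) : 0 <= eta ->
  (forall k, measurable (g @^-1` [set k])) ->
  (forall k, measurable (g @^-1` [set k] `&` B)) ->
  (forall k, (mu (g @^-1` [set k] `&` B) <= eta%:E * mu (g @^-1` [set k]))%E) ->
  (mu B <= eta%:E * mu [set: T])%E.
Proof.
move=> eta_ge0 fiber_meas fiberB_meas fiberB_le.
have fibers_trivI (C : set T) : trivIset setT (fun k => g @^-1` [set k] `&` C).
  by move=> i j _ _ [t [[/= <- _] [/= <- _]]].
have BE : B = \bigcup_k (g @^-1` [set k] `&` B).
  by apply/seteqP; split => [t Bt | t [k _ []] //]; exists (g t).
have TE : [set: T] = \bigcup_k (g @^-1` [set k] `&` [set: T]).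
  by apply/seteqP; split => // t _; exists (g t).
rewrite BE TE !measure_bigcup //; last by move=> k _; rewrite setIT.
rewrite -nneseriesZl; last by move=> k _; exact: measure_ge0.
apply: lee_nneseries => [k _ _ | k _]; first exact: measure_ge0.
by rewrite setIT; exact: fiberB_le.
Qed.

Lemma measure_le_fibers {I : countType} (f : T -> I) (B : set T) (eta : R) :
  0 <= eta ->
  (forall i, measurable (f @^-1` [set i])) ->
  (forall i, measurable (f @^-1` [set i] `&` B)) ->
  (forall i, (mu (f @^-1` [set i] `&` B) <= eta%:E * mu (f @^-1` [set i]))%E) ->
  (mu B <= eta%:E * mu [set: T])%E.
Proof.
move=> eta_ge0 fiber_meas fiberB_meas fiberB_le.
have fiberE k : (pickle \o f) @^-1` [set k] =
    if pickle_inv k is Some i then f @^-1` [set i] else set0.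
  apply/seteqP; split => [t /= <- | ]; first by rewrite pickleK_inv.
  case Ek: (pickle_inv k) => [i|] // t /= ->.
  by have := @pickle_invK I k; rewrite Ek.
apply: (measure_le_nat_fibers (pickle \o f)) => // k; rewrite fiberE;
  by case: (pickle_inv k) => [i|]; rewrite ?set0I ?measure0 ?mule0.
Qed.

End FiberBound.

Section Sampling.
Variables (R : realType) (L : nat) (xi : 'I_L.+1 -> bool -> R).
Variables (eta2 : R) (delta2 : nat -> R).
Variables (d : measure_display) (T : measurableType d) (P : probability T R).
Variables (N : T -> nat) (m : T -> seq 'I_L.+1) (u x : T -> seq bool).
Hypotheses (L_ge2 : (2 <= L)%N)
  (xi_bounded : forall M U, 0 <= cMU R L M U <= 1 -> `|xi M U| <= 1)
  (delta2_tail : forall n : nat, (1 <= n)%N -> expR (- (n%:R * delta2 n)) <= eta2)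
  (sizes : forall t, size (m t) = N t /\ size (u t) = N t /\ size (x t) = N t)
  (samples_in_W : forall t, (1 <= N t)%N ->
      forall w, w \in triples L (m t) (u t) (x t) -> inW L w)
  (measurable_atom : forall n ms us xs,
      measurable [set t | N t = n /\ m t = ms /\ u t = us /\ x t = xs])
  (atom_prob : forall n ms us xs,
      (1 <= n)%N -> size ms = n -> size us = n -> size xs = n ->
      P [set t | N t = n /\ m t = ms /\ u t = us /\ x t = xs] =
        ((bern_prod R L ms us xs)%:E *
         P [set t | N t = n /\ m t = ms /\ u t = us])%E).

Let fiber n ms us := [set t | N t = n /\ m t = ms /\ u t = us].
Let atypical_event := [set t | (1 <= N t)%N /\
  ~ P_xi_delta R L xi (delta2 (N t)) (emp_type R L (triples L (m t) (u t) (x t)))].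

Lemma fiber_atomE n ms us xs :
  fiber n ms us `&` x @^-1` [set xs] =
  [set t | N t = n /\ m t = ms /\ u t = us /\ x t = xs].
Proof. by apply/seteqP; split => t; rewrite /fiber /=; tauto. Qed.

Lemma fiber_bitseqsE n ms us :
  fiber n ms us = fiber n ms us `&` x @^-1` [set` bitseqs n].
Proof.
apply/seteqP; split => [t fiber_t | t []//]; split => //=.
by case: fiber_t => <- _; rewrite mem_bitseqs; have [_ [_ ->]] := sizes t.
Qed.

Lemma fiber_atypicalE n ms us : (0 < n)%N ->
  fiber n ms us `&` atypical_event =
  fiber n ms us `&`
    x @^-1` [set` [seq xs <- bitseqs n | atypical R L xi (delta2 n) ms us xs]].
Proof.
move=> n_gt0; apply/seteqP; split => t /=; rewrite mem_filter.
- move=> [[<- [<- <-]] [N_gt0 not_typical]]; split => //.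
  rewrite mem_bitseqs; have [_ [_ ->]] := sizes t; rewrite eqxx andbT.
  by apply/asboolP; split => //; exact: samples_in_W.
- move=> [[Nt [<- <-]] /andP[/asboolP[_ not_typical] _]].
  by rewrite /fiber /atypical_event /= Nt; do !split.
Qed.

Lemma eta2_ge0 : 0 <= eta2.
Proof. exact: le_trans (expR_ge0 _) (delta2_tail 1 (leqnn 1)). Qed.

Lemma fiber0_atypical ms us : fiber 0 ms us `&` atypical_event = set0.
Proof. by rewrite -subset0 => t [[N0 _] [N_gt0 _]]; rewrite N0 in N_gt0. Qed.

Lemma measurable_fiber n ms us : measurable (fiber n ms us).
Proof.
by rewrite fiber_bitseqsE; apply: measurable_preimage_seq => xs; rewrite fiber_atomE.
Qed.

Lemma measurable_fiber_atypical n ms us : measurable (fiber n ms us `&` atypical_event).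
Proof.
case: n => [|n]; first by rewrite fiber0_atypical.
rewrite fiber_atypicalE //.
by apply: measurable_preimage_seq => xs; rewrite fiber_atomE.
Qed.

Lemma fiber_atypical_le n ms us :
  (P (fiber n ms us `&` atypical_event) <= eta2%:E * P (fiber n ms us))%E.
Proof.
have bound_ge0 A : (0 <= eta2%:E * P A)%E.
  by apply: mule_ge0; rewrite ?lee_fin ?eta2_ge0.
case: n => [|n]; first by rewrite fiber0_atypical measure0.
have [/andP[/eqP ms_n /eqP us_n] | bad_sizes] :=
  boolP ((size ms == n.+1) && (size us == n.+1)); last first.
  suff -> : fiber n.+1 ms us = set0 by rewrite set0I measure0 mule0.
  rewrite -subset0 => t [Nt [mt ut]]; have [ms_N [us_N _]] := sizes t.
  by move/negP: bad_sizes; apply; rewrite -mt -ut ms_N us_N Nt !eqxx.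
rewrite fiber_atypicalE // measure_preimage_seq; first last.
- by rewrite filter_uniq // uniq_bitseqs.
- by move=> xs; rewrite fiber_atomE.
rewrite big_filter big_seq_cond.
rewrite (eq_bigr (fun xs => (bern_prod R L ms us xs)%:E * P (fiber n.+1 ms us)))%E;
  last by move=> xs /andP[]; rewrite mem_bitseqs => /eqP xs_n _;
          rewrite fiber_atomE; exact: atom_prob.
rewrite -big_seq_cond -ge0_sume_distrl; last first.
  by move=> xs; rewrite lee_fin; exact: atypical_bern_prod_ge0.
rewrite sumEFin lee_wpmul2r ?measure_ge0 // lee_fin.
apply: le_trans (delta2_tail n.+1 isT).
have := sum_bern_prod_atypical R L xi L_ge2 xi_bounded (delta2 n.+1) ms us.
by rewrite us_n; apply.
Qed.

End Sampling.

Theorem proposition2 (R : realType) (L : nat) (hL : (2 <= L)%N)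
  (xi : 'I_L.+1 -> bool -> R)
  (hxi : forall (M : 'I_L.+1) (U : bool),
      0 <= cMU R L M U <= 1 -> `|xi M U| <= 1)
  (eta2 : R) (delta2 : nat -> R)
  (hdelta : forall n : nat, (1 <= n)%N -> expR (- (n%:R * delta2 n)) <= eta2)
  (d : measure_display) (T : measurableType d) (P : probability T R)
  (N : T -> nat) (m : T -> seq 'I_L.+1) (u x : T -> seq bool)
  (hsize : forall t, size (m t) = N t /\ size (u t) = N t /\ size (x t) = N t)
  (hW : forall t, (1 <= N t)%N ->
      forall w, w \in triples L (m t) (u t) (x t) -> inW L w)
  (hmeas : forall (n : nat) (ms : seq 'I_L.+1) (us xs : seq bool),
      measurable [set t | N t = n /\ m t = ms /\ u t = us /\ x t = xs])
  (hcond : forall (n : nat) (ms : seq 'I_L.+1) (us xs : seq bool),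
      (1 <= n)%N -> size ms = n -> size us = n -> size xs = n ->
      P [set t | N t = n /\ m t = ms /\ u t = us /\ x t = xs] =
        ((bern_prod R L ms us xs)%:E *
         P [set t | N t = n /\ m t = ms /\ u t = us])%E) :
  (P [set t | (1 <= N t)%N /\
        ~ P_xi_delta R L xi (delta2 (N t))
            (emp_type R L (triples L (m t) (u t) (x t)))] <= eta2%:E)%E.
Proof.
pose obs t := (N t, m t, u t).
have obsE n ms us :
    obs @^-1` [set (n, ms, us)] = [set t | N t = n /\ m t = ms /\ u t = us].
  by apply/seteqP; split => t; rewrite /obs /=; [case=> -> -> -> | case=> -> [-> ->]].
rewrite -[eta2%:E]mule1 -(probability_setT P).
apply: (measure_le_fibers P obs) => [|[[n ms] us]|[[n ms] us]|[[n ms] us]];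
  rewrite ?obsE.
- exact: eta2_ge0 hdelta.
- exact: measurable_fiber.
- exact: measurable_fiber_atypical.
- exact: fiber_atypical_le.
Qed.
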